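(* Let $w_0>0$, $\theta\in\mathbb{R}$ and $\alpha_{\max}>0$. With the inner product $\langle x,y\rangle=\frac{w_0}{2\pi}\int_{-\pi/w_0}^{\pi/w_0}x(t)y(t)\,dt$ and $\psi_1(t)=\frac{3\sqrt5}{2\pi^2}w_0^2t^2-\frac{\sqrt5}{2}$, $\psi_2(t)=\frac{\sqrt3}{\pi}w_0t$, for $\alpha\in[0,\alpha_{\max}]$ and $\phi\in[-\pi,\pi]$ let $s_{\alpha,\phi}(t)=\alpha\sin(w_0t+\phi+\theta)$, $a^*(\alpha,\phi)=\langle s_{\alpha,\phi},\psi_1\rangle$, $b^*(\alpha,\phi)=\langle s_{\alpha,\phi},\psi_2\rangle$. Then the set $\{(a^*(\alpha,\phi),b^*(\alpha,\phi)):\alpha\in[0,\alpha_{\max}],\ \phi\in[-\pi,\pi]\}$ is the filled elliptical region (ellipse together with its interior) bounded by the ellipse $\{(a^*(\alpha_{\max},\phi),b^*(\alpha_{\max},\phi)):\phi\in[-\pi,\pi]\}$, and for each fixed $\phi$ the Euclidean distance of $(a^*(\alpha,\phi),b^*(\alpha,\phi))$ from the origin (the center of this ellipse) is proportional to $\alpha$.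
   Context: $\psi_1,\psi_2$ together with $\psi_3=1$ are orthonormal for this inner product; $a^*,b^*$ are the least-squares coefficients of the signal on $\psi_1,\psi_2$. *)

From Stdlib Require Import Reals Lra.
From Coquelicot Require Import Coquelicot.
Open Scope R_scope.

Definition inner (w0 : R) (x y : R -> R) : R :=
  w0 / (2 * PI) * RInt (fun t => x t * y t) (- PI / w0) (PI / w0).

Definition psi1 (w0 : R) (t : R) : R :=
  3 * sqrt 5 / (2 * PI ^ 2) * w0 ^ 2 * t ^ 2 - sqrt 5 / 2.

Definition psi2 (w0 : R) (t : R) : R := sqrt 3 / PI * w0 * t.

Definition sig (w0 theta alpha phi : R) (t : R) : R :=
  alpha * sin (w0 * t + phi + theta).

Definition astar (w0 theta alpha phi : R) : R :=
  inner w0 (sig w0 theta alpha phi) (psi1 w0).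

Definition bstar (w0 theta alpha phi : R) : R :=
  inner w0 (sig w0 theta alpha phi) (psi2 w0).

(** Integrating by parts, the coefficients of [alpha sin (w0 t + c)] on
    [psi1] and [psi2] are [- p alpha sin c] and [q alpha cos c] with
    [p = 3 sqrt 5 / PI^2] and [q = sqrt 3 / PI]. So for fixed [alpha] the pair
    of coefficients runs over the axis-parallel ellipse [(x/p)^2 + (y/q)^2 = alpha^2]
    as [phi] ranges over a full period, and letting [alpha] range over
    [[0, amax]] fills the ellipse of level [amax^2]; along a fixed phase the
    point moves on a ray, so its distance to the origin is linear in [alpha]. *)
From Stdlib Require Import Reals Lra.
From Coquelicot Require Import Coquelicot.
Open Scope R_scope.

Lemma is_RInt_sin_quadratic (w a c u v z : R) : 0 < w ->
  is_RInt (fun t => a * sin (w * t + c) * (u * t ^ 2 + v * t + z)) (- PI / w) (PI / w)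
    (a * (2 * PI / w ^ 2) * (v * cos c - 2 * u * sin c / w)).
Proof.
intros hw.
set (F := fun t => a * (u * (- t ^ 2 * cos (w * t + c) / w + 2 * t * sin (w * t + c) / w ^ 2
                             + 2 * cos (w * t + c) / w ^ 3)
                        + v * (- t * cos (w * t + c) / w + sin (w * t + c) / w ^ 2)
                        - z * cos (w * t + c) / w)).
replace (a * (2 * PI / w ^ 2) * (v * cos c - 2 * u * sin c / w))
  with (F (PI / w) - F (- PI / w)).
- apply (is_RInt_derive F).
  + intros t _. unfold F. auto_derive; [trivial|]. field. lra.
  + intros t _. apply (@ex_derive_continuous R_AbsRing R_NormedModule).
    auto_derive. trivial.
- unfold F.
  replace (w * (PI / w) + c) with (c + PI) by (field; lra).
  replace (w * (- PI / w) + c) with (c - PI) by (field; lra).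
  rewrite sin_plus, cos_plus, sin_minus, cos_minus, sin_PI, cos_PI.
  field. lra.
Qed.

Lemma unit_circle_angle (s c : R) : s ^ 2 + c ^ 2 = 1 ->
  exists phi, - PI <= phi <= PI /\ sin phi = s /\ cos phi = c.
Proof.
intros Hsc.
assert (Hc : -1 <= c <= 1) by (split; nra).
assert (Hs : sqrt (1 - c²) = Rabs s).
{ replace (1 - c²) with (s²) by (unfold Rsqr; nra). apply sqrt_Rsqr_abs. }
pose proof (acos_bound c).
destruct (Rle_dec 0 s).
- exists (acos c). split; [lra|].
  rewrite sin_acos, cos_acos, Hs, Rabs_pos_eq by lra. auto.
- exists (- acos c). split; [lra|].
  rewrite sin_neg, cos_neg, sin_acos, cos_acos, Hs, Rabs_left by lra. split; ring.
Qed.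

Lemma unit_circle_angle_shift (theta s c : R) : s ^ 2 + c ^ 2 = 1 ->
  exists phi, - PI <= phi <= PI /\ sin (phi + theta) = s /\ cos (phi + theta) = c.
Proof.
intros Hsc.
pose proof (sin2_cos2 theta) as Ht. unfold Rsqr in Ht.
(* rotate [(s, c)] back by [theta] *)
destruct (unit_circle_angle (s * cos theta - c * sin theta) (c * cos theta + s * sin theta))
  as [phi [Hphi [Hs Hc]]].
{ transitivity ((s ^ 2 + c ^ 2) * (sin theta * sin theta + cos theta * cos theta)).
  - ring.
  - rewrite Hsc, Ht. ring. }
exists phi. split; [exact Hphi|].
rewrite sin_plus, cos_plus, Hs, Hc. split.
- transitivity (s * (sin theta * sin theta + cos theta * cos theta)); [ring|].
  rewrite Ht. ring.
- transitivity (c * (sin theta * sin theta + cos theta * cos theta)); [ring|].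
  rewrite Ht. ring.
Qed.

Definition ellipse_form (p q x y : R) : R := (x / p) ^ 2 + (y / q) ^ 2.

Lemma ellipse_form_ge0 (p q x y : R) : 0 <= ellipse_form p q x y.
Proof. unfold ellipse_form. apply Rplus_le_le_0_compat; apply pow2_ge_0. Qed.

Lemma ellipse_form_angle (p q r theta x y : R) : 0 < p -> 0 < q -> 0 <= r ->
  ellipse_form p q x y = r ^ 2 ->
  exists phi, - PI <= phi <= PI /\
    x = - p * r * sin (phi + theta) /\ y = q * r * cos (phi + theta).
Proof.
unfold ellipse_form. intros hp hq hr Hxy.
destruct (Req_dec r 0) as [-> | hr0].
- exists 0. split; [pose proof PI_RGT_0; lra|].
  assert (x / p = 0) by nra. assert (y / q = 0) by nra.
  replace x with (x / p * p) by (field; lra).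
  replace y with (y / q * q) by (field; lra). split; nra.
- destruct (unit_circle_angle_shift theta (- x / (p * r)) (y / (q * r)))
    as [phi [Hphi [Hs Hc]]].
  { replace ((- x / (p * r)) ^ 2 + (y / (q * r)) ^ 2)
      with (((x / p) ^ 2 + (y / q) ^ 2) / r ^ 2) by (field; lra).
    rewrite Hxy. field. lra. }
  exists phi. split; [exact Hphi|].
  rewrite Hs, Hc. split; field; lra.
Qed.

Definition astar_gain : R := 3 * sqrt 5 / PI ^ 2.
Definition bstar_gain : R := sqrt 3 / PI.

Lemma astar_gain_gt0 : 0 < astar_gain.
Proof.
pose proof PI_RGT_0. unfold astar_gain.
apply Rdiv_lt_0_compat; [apply Rmult_lt_0_compat; [lra | apply sqrt_lt_R0; lra]|].
apply pow_lt. lra.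
Qed.

Lemma bstar_gain_gt0 : 0 < bstar_gain.
Proof.
pose proof PI_RGT_0. unfold bstar_gain.
apply Rdiv_lt_0_compat; [apply sqrt_lt_R0|]; lra.
Qed.

Section Coefficients.

Variables w0 theta : R.
Hypothesis hw0 : 0 < w0.

Lemma astar_closed (alpha phi : R) :
  astar w0 theta alpha phi = - astar_gain * alpha * sin (phi + theta).
Proof.
unfold astar, inner, sig, psi1, astar_gain.
rewrite (RInt_ext _ (fun t => alpha * sin (w0 * t + (phi + theta))
   * (3 * sqrt 5 / (2 * PI ^ 2) * w0 ^ 2 * t ^ 2 + 0 * t + - (sqrt 5 / 2))))
  by (intros t _; simpl; rewrite Rplus_assoc; ring).
rewrite (is_RInt_unique _ _ _ _ (is_RInt_sin_quadratic _ _ _ _ _ _ hw0)).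
pose proof PI_RGT_0. field. lra.
Qed.

Lemma bstar_closed (alpha phi : R) :
  bstar w0 theta alpha phi = bstar_gain * alpha * cos (phi + theta).
Proof.
unfold bstar, inner, sig, psi2, bstar_gain.
rewrite (RInt_ext _ (fun t => alpha * sin (w0 * t + (phi + theta))
   * (0 * t ^ 2 + sqrt 3 / PI * w0 * t + 0)))
  by (intros t _; simpl; rewrite Rplus_assoc; ring).
rewrite (is_RInt_unique _ _ _ _ (is_RInt_sin_quadratic _ _ _ _ _ _ hw0)).
pose proof PI_RGT_0. field. lra.
Qed.

Lemma ellipse_form_coeffs (alpha phi : R) :
  ellipse_form astar_gain bstar_gain
    (astar w0 theta alpha phi) (bstar w0 theta alpha phi) = alpha ^ 2.
Proof.
pose proof astar_gain_gt0. pose proof bstar_gain_gt0.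
pose proof (sin2_cos2 (phi + theta)) as Ht. unfold Rsqr in Ht.
unfold ellipse_form. rewrite astar_closed, bstar_closed.
transitivity (alpha ^ 2 * (sin (phi + theta) * sin (phi + theta)
                           + cos (phi + theta) * cos (phi + theta))).
- field. lra.
- rewrite Ht. ring.
Qed.

Lemma coeffs_curve_iff (alpha x y : R) : 0 <= alpha ->
  (exists phi, - PI <= phi <= PI /\
     x = astar w0 theta alpha phi /\ y = bstar w0 theta alpha phi)
  <-> ellipse_form astar_gain bstar_gain x y = alpha ^ 2.
Proof.
intros ha. split.
- intros [phi [_ [-> ->]]]. apply ellipse_form_coeffs.
- intros Hxy.
  destruct (ellipse_form_angle _ _ _ theta _ _ astar_gain_gt0 bstar_gain_gt0 ha Hxy)
    as [phi [Hphi [Hx Hy]]].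
  exists phi. rewrite astar_closed, bstar_closed. auto.
Qed.

Lemma coeffs_region_iff (amax x y : R) : 0 <= amax ->
  (exists alpha phi, 0 <= alpha <= amax /\ - PI <= phi <= PI /\
     x = astar w0 theta alpha phi /\ y = bstar w0 theta alpha phi)
  <-> ellipse_form astar_gain bstar_gain x y <= amax ^ 2.
Proof.
intros hamax. split.
- intros [alpha [phi [Ha Hcurve]]].
  assert (Hxy : ellipse_form astar_gain bstar_gain x y = alpha ^ 2).
  { apply (coeffs_curve_iff alpha x y (proj1 Ha)). exists phi. exact Hcurve. }
  rewrite Hxy. apply pow_incr. exact Ha.
- intros Hxy.
  set (r := ellipse_form astar_gain bstar_gain x y) in *.
  assert (Hr : 0 <= r) by apply ellipse_form_ge0.
  exists (sqrt r).
  assert (sqrt r <= amax).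
  { rewrite <- (sqrt_pow2 amax) by exact hamax. apply sqrt_le_1_alt. exact Hxy. }
  destruct (proj2 (coeffs_curve_iff (sqrt r) x y (sqrt_pos r)))
    as [phi Hcurve]; [rewrite pow2_sqrt; auto|].
  exists phi. pose proof (sqrt_pos r). split; [lra | exact Hcurve].
Qed.

Lemma coeffs_norm (alpha phi : R) : 0 <= alpha ->
  sqrt (astar w0 theta alpha phi ^ 2 + bstar w0 theta alpha phi ^ 2)
  = sqrt ((astar_gain * sin (phi + theta)) ^ 2 + (bstar_gain * cos (phi + theta)) ^ 2)
    * alpha.
Proof.
intros ha. rewrite astar_closed, bstar_closed.
replace ((- astar_gain * alpha * sin (phi + theta)) ^ 2
         + (bstar_gain * alpha * cos (phi + theta)) ^ 2)
  with (alpha ^ 2 * ((astar_gain * sin (phi + theta)) ^ 2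
                     + (bstar_gain * cos (phi + theta)) ^ 2)) by ring.
rewrite sqrt_mult_alt, sqrt_pow2 by nra. ring.
Qed.

End Coefficients.

Theorem corollary2 (w0 theta amax : R) (hw0 : 0 < w0) (hamax : 0 < amax) :
  (exists A B C : R,
      0 < A /\ B * B < A * C /\
      (* the curve traced at alpha = amax is the ellipse A x^2 + 2 B x y + C y^2 = 1,
         centred at the origin *)
      (forall x y : R,
          (exists phi, - PI <= phi <= PI /\
                       x = astar w0 theta amax phi /\ y = bstar w0 theta amax phi)
          <-> A * x ^ 2 + 2 * B * x * y + C * y ^ 2 = 1) /\
      (* the full set of coefficient pairs is the filled ellipse *)
      (forall x y : R,
          (exists alpha phi, 0 <= alpha <= amax /\ - PI <= phi <= PI /\
                       x = astar w0 theta alpha phi /\ y = bstar w0 theta alpha phi)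
          <-> A * x ^ 2 + 2 * B * x * y + C * y ^ 2 <= 1)) /\
  (* for fixed phi, distance from the origin is proportional to alpha *)
  (forall phi, - PI <= phi <= PI ->
     exists k : R, 0 <= k /\
       forall alpha, 0 <= alpha <= amax ->
         sqrt (astar w0 theta alpha phi ^ 2 + bstar w0 theta alpha phi ^ 2) = k * alpha).
Proof.
pose proof astar_gain_gt0 as hp. pose proof bstar_gain_gt0 as hq.
set (A := / (astar_gain * amax) ^ 2). set (C := / (bstar_gain * amax) ^ 2).
assert (hA : 0 < A) by (apply Rinv_0_lt_compat, pow_lt; nra).
assert (hC : 0 < C) by (apply Rinv_0_lt_compat, pow_lt; nra).
assert (Hform : forall x y, A * x ^ 2 + 2 * 0 * x * y + C * y ^ 2
                  = ellipse_form astar_gain bstar_gain x y / amax ^ 2)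
  by (intros; unfold A, C, ellipse_form; field; lra).
assert (hamax2 : 0 < amax ^ 2) by nra.
split.
- exists A, 0, C. split; [exact hA|]. split; [nra|]. split; intros x y.
  + rewrite coeffs_curve_iff, Hform by lra.
    split; [apply Rdiv_diag_eq; lra | apply Rdiv_diag_uniq].
  + rewrite coeffs_region_iff, Hform by lra. apply Rdiv_le_1. exact hamax2.
- intros phi _. eexists. split; [apply sqrt_pos|].
  intros alpha Ha. apply coeffs_norm; lra.
Qed.
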